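(* Let $X$ be a real Banach space whose norm is Fréchet differentiable and let $(S,\mu)$ be a complete, $\sigma$-finite positive measure space. Let $f\in L^1(\mu,X)$ be a smooth point of $L^1(\mu,X)$ such that $Z(f)^c=\{s\in S:f(s)\neq0\}$ is an atom and $f(s)$ is a left symmetric point of $X$ for each $s\in S$. Then $f$ is a left symmetric point of $L^1(\mu,X)$.
   Context: $L^1(\mu,X)$ is the Lebesgue–Bochner space of (classes of a.e. equal) strongly measurable $f:S\to X$ with $\|f\|=\int_S\|f(s)\|\,d\mu(s)<\infty$; $Z(f)=\{s:f(s)=0\}$. In a real normed space $Y$, $x\perp_{BJ}y$ means $\|x+\lambda y\|\ge\|x\|$ for all $\lambda\in\mathbb{R}$; $x$ is a left symmetric point if $x\perp_{BJ}y$ implies $y\perp_{BJ}x$ for all $y\in Y$. A non-zero $x$ is smooth if there is a unique norm-one $F\in Y^*$ with $F(x)=\|x\|$. The norm of $X$ is Fréchet differentiable if for every non-zero $x$ there is $\varphi\in X^*$ with $\lim_{h\to0}\big|\|x+h\|-\|x\|-\varphi(h)\big|/\|h\|=0$. A measurable set $A$ is an atom if $\mu(A)>0$ and every measurable $B\subseteq A$ has $\mu(B)=0$ or $\mu(B)=\mu(A)$. *)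

From HB Require Import structures.
From mathcomp Require Import all_boot all_order all_algebra.
From mathcomp Require Import all_classical all_reals all_analysis.
Set Implicit Arguments. Unset Strict Implicit. Unset Printing Implicit Defensive.
Import Order.TTheory GRing.Theory Num.Theory.
Import numFieldNormedType.Exports.
Local Open Scope classical_set_scope.
Local Open Scope ring_scope.

Section Defs.
Context {R : realType}.

Definition BJ_orth {V : Type} (N : V -> R) (add : V -> V -> V)
  (scal : R -> V -> V) (x y : V) : Prop :=
  forall l : R, N x <= N (add x (scal l y)).

Definition BJ {X : normedModType R} (x y : X) : Prop :=
  BJ_orth (fun z : X => `|z|) +%R *:%R x y.

Definition left_symmetric {X : normedModType R} (x : X) : Prop :=
  forall y : X, BJ x y -> BJ y x.

Definition frechet_differentiable_norm (X : normedModType R) : Prop :=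
  forall x : X, x != 0 -> differentiable (fun y : X => `|y| : R) x.

Context {d : measure_display} {S : measurableType d}.

Definition simple_fun {X : normedModType R} (phi : S -> X) : Prop :=
  finite_set (range phi) /\ forall x : X, measurable (phi @^-1` [set x]).

Definition strongly_measurable (mu : {measure set S -> \bar R})
  {X : normedModType R} (f : S -> X) : Prop :=
  exists phi : nat -> S -> X, (forall n, simple_fun (phi n)) /\
    {ae mu, forall s, phi n s @[n --> \oo] --> f s}.

Definition L1 (mu : {measure set S -> \bar R}) {X : normedModType R}
  (f : S -> X) : Prop :=
  strongly_measurable mu f /\ (\int[mu]_s (`|f s|)%:E < +oo)%E.

Definition L1norm (mu : {measure set S -> \bar R}) {X : normedModType R}
  (f : S -> X) : R := fine (\int[mu]_s (`|f s|)%:E).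

Definition fadd {X : normedModType R} (f g : S -> X) : S -> X :=
  fun s => f s + g s.
Definition fscal {X : normedModType R} (a : R) (f : S -> X) : S -> X :=
  fun s => a *: f s.

Definition BJ_L1 (mu : {measure set S -> \bar R}) {X : normedModType R}
  (f g : S -> X) : Prop := BJ_orth (L1norm mu) fadd fscal f g.

Definition left_symmetric_L1 (mu : {measure set S -> \bar R})
  {X : normedModType R} (f : S -> X) : Prop :=
  forall g : S -> X, L1 mu g -> BJ_L1 mu f g -> BJ_L1 mu g f.

(* F is a norm-one element of the dual of L^1(mu, X): a linear functional on
   L^1 with operator norm (w.r.t. the L^1 norm) equal to 1.  Bounded
   functionals vanish on null functions, so they are functionals on classes. *)
Definition L1_dual_norm_one (mu : {measure set S -> \bar R})
  {X : normedModType R} (F : (S -> X) -> R) : Prop :=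
  [/\ (forall g h, L1 mu g -> L1 mu h -> F (fadd g h) = F g + F h),
      (forall (a : R) g, L1 mu g -> F (fscal a g) = a * F g),
      (forall g, L1 mu g -> `|F g| <= L1norm mu g) &
      (forall e : R, 0 < e -> exists g, [/\ L1 mu g, L1norm mu g <= 1 &
                                            1 - e < `|F g|])].

(* f is a smooth point of L^1(mu, X): f is non-zero (as a class) and there is
   a unique norm-one F in the dual with F f = ||f|| (functionals being
   identified when they agree on L^1). *)
Definition smooth_L1 (mu : {measure set S -> \bar R}) {X : normedModType R}
  (f : S -> X) : Prop :=
  [/\ L1norm mu f != 0,
      (exists F, L1_dual_norm_one mu F /\ F f = L1norm mu f) &
      (forall F1 F2, L1_dual_norm_one mu F1 -> F1 f = L1norm mu f ->
                     L1_dual_norm_one mu F2 -> F2 f = L1norm mu f ->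
                     forall g, L1 mu g -> F1 g = F2 g)].

Definition is_atom (mu : {measure set S -> \bar R}) (A : set S) : Prop :=
  [/\ measurable A, (0 < mu A)%E &
      forall B, measurable B -> B `<=` A -> mu B = 0%E \/ mu B = mu A].

Definition complete_measure (mu : {measure set S -> \bar R}) : Prop :=
  forall N : set S, mu.-negligible N -> measurable N.

End Defs.

From HB Require Import structures.
From mathcomp Require Import all_boot all_order all_algebra.
From mathcomp Require Import all_classical all_reals all_analysis.
From mathcomp Require Import measurable_realfun.
Import Order.TTheory GRing.Theory Num.Theory.
Import numFieldNormedType.Exports.
Local Open Scope classical_set_scope.
Local Open Scope ring_scope.
Set Implicit Arguments. Unset Strict Implicit. Unset Printing Implicit Defensive.

(* Let A be the support of f and F a norm-one functional with F f = ||f||.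
   Put psi x := F (x 1_A) / mu A, a functional of norm at most 1 on X.  If a
   set B of finite measure lies outside A, then for |e| <= 1 the functional
   h |-> F (h 1_(~B)) + e * int_B psi (h s) ds still norms f; comparing e = 1
   with e = -1 on the function c 1_B, where c is the a.e. value of f on the
   atom A (so psi c = ||f|| / mu A <> 0), smoothness forces mu B = 0.  By
   sigma-finiteness mu is then concentrated on the atom A, every element of
   L^1(mu, X) is a.e. constant, its norm is the norm of that constant times
   mu S, and Birkhoff-James orthogonality in L^1(mu, X) is orthogonality of
   the constants in X, where f is left symmetric by hypothesis. *)

Lemma nonexpansive_continuous {R : numFieldType} {X Y : normedModType R} (k : X -> Y) :
  (forall z w, `|k z - k w| <= `|z - w|) -> continuous k.
Proof.
move=> kl z; apply/cvgrPdist_lt => e e0.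
near=> w; apply: le_lt_trans (kl _ _) _; near: w.
exact: (@cvgr_dist_lt _ _ _ _ _ id z cvg_id _ e0).
Unshelve. all: by end_near.
Qed.

Section Restrict0.
Context {R : realType} {d : measure_display} {S : measurableType d}.

(* The library's [u \_ C] pads with [point], which is not [0] in a normed
   space. *)
Definition restrict0 {X : normedModType R} (C : set S) (u : S -> X) : S -> X :=
  fun s => if s \in C then u s else 0.

Lemma fadd_restrict0C {X : normedModType R} C (u : S -> X) :
  fadd (restrict0 C u) (restrict0 (~` C) u) = u.
Proof.
apply/funext => s; rewrite /fadd /restrict0 in_setC.
by case: (s \in C); rewrite ?addr0 ?add0r.
Qed.

Lemma restrict0_fadd {X : normedModType R} C (u v : S -> X) :
  restrict0 C (fadd u v) = fadd (restrict0 C u) (restrict0 C v).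
Proof. by apply/funext => s; rewrite /fadd /restrict0; case: ifP; rewrite ?addr0. Qed.

Lemma restrict0_fscal {X : normedModType R} C a (u : S -> X) :
  restrict0 C (fscal a u) = fscal a (restrict0 C u).
Proof. by apply/funext => s; rewrite /fscal /restrict0; case: ifP; rewrite ?scaler0. Qed.

Lemma preimage_restrict0 {X : normedModType R} C (u : S -> X) (B : set X) :
  restrict0 C u @^-1` B = (if 0 \in B then ~` C else set0) `|` C `&` u @^-1` B.
Proof.
apply/seteqP; split => s; rewrite /restrict0 /=.
- case: (pselect (C s)) => Cs; first by rewrite mem_set // => Bu; right.
  by rewrite memNset // => B0; left; rewrite mem_set.
- case=> [|[Cs]]; last by rewrite mem_set.
  by case: ifPn => [/set_mem B0 Cs|_ []]; rewrite memNset.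
Qed.

End Restrict0.

Section StronglyMeasurable.
Context {R : realType} {d : measure_display} {S : measurableType d}.
Variable mu : {measure set S -> \bar R}.
Context {X : normedModType R}.
Implicit Types (phi u : S -> X) (C : set S).

Lemma simple_fun_preimage phi : simple_fun phi ->
  forall P : set X, measurable (phi @^-1` P).
Proof.
move=> [fin mphi] P.
have -> : phi @^-1` P = \bigcup_(x in range phi `&` P) phi @^-1` [set x].
  apply/seteqP; split => [s Ps|s [x [_ Px] /= ->//]].
  by exists (phi s) => //; split => //; exists s.
by apply: fin_bigcup_measurable => //; exact: finite_setIl.
Qed.

Lemma simple_fun_comp {Y : normedModType R} phi (k : X -> Y) :
  simple_fun phi -> simple_fun (k \o phi).
Proof.
move=> sphi; split => [|y]; last by rewrite comp_preimage; exact: simple_fun_preimage.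
by rewrite -(image_comp phi k); exact: finite_image sphi.1.
Qed.

Lemma simple_fun_cst (x : X) : simple_fun (cst x : S -> X).
Proof.
split=> [|y]; first exact: finite_image_cst.
by rewrite preimage_cst; case: (_ \in _).
Qed.

Lemma simple_fun_restrict0 phi C : measurable C ->
  simple_fun phi -> simple_fun (restrict0 C phi).
Proof.
move=> mC sphi; split.
  apply: (@sub_finite_set _ _ (range phi `|` [set 0])).
    by move=> _ [s _ <-]; rewrite /restrict0; case: ifP => _; [left; exists s|right].
  by rewrite finite_setU; split; [exact: sphi.1|exact: finite_set1].
move=> x; rewrite preimage_restrict0.
apply: measurableU; last by apply: measurableI => //; exact: simple_fun_preimage.
by case: ifP => _; [exact: measurableC|exact: measurable0].
Qed.

Lemma strongly_measurable_comp {Y : normedModType R} u (k : X -> Y) :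
  continuous k -> strongly_measurable mu u -> strongly_measurable mu (k \o u).
Proof.
move=> ck [phi [sphi phiu]]; exists (fun n => k \o phi n); split.
  by move=> n; exact: simple_fun_comp.
by apply: filterS phiu => s /= cvu; exact: (continuous_cvg _ (ck (u s))).
Qed.

Lemma strongly_measurable_restrict0 u C : measurable C ->
  strongly_measurable mu u -> strongly_measurable mu (restrict0 C u).
Proof.
move=> mC [phi [sphi phiu]]; exists (fun n => restrict0 C (phi n)); split.
  by move=> n; exact: simple_fun_restrict0.
by apply: filterS phiu => s cvu; rewrite /restrict0; case: ifP => _ //; exact: cvg_cst.
Qed.

Lemma simple_fun_strongly_measurable phi :
  simple_fun phi -> strongly_measurable mu phi.
Proof.
by move=> sphi; exists (fun=> phi); split => //; apply: aeW => s; exact: cvg_cst.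
Qed.

End StronglyMeasurable.

Section CompleteMeasure.
Context {R : realType} {d : measure_display} {S : measurableType d}.
Variable mu : {measure set S -> \bar R}.
Hypothesis cmu : complete_measure mu.

Lemma ae_measurable (D : set S) : {ae mu, forall s, D s} -> measurable D.
Proof. by move=> nD; rewrite -[D]setCK; apply/measurableC/cmu. Qed.

Lemma measurable_fun_ae {d' : measure_display} {T : measurableType d'} (D : set S)
    (v : S -> T) :
  {ae mu, forall s, D s} -> measurable_fun D v -> measurable_fun setT v.
Proof.
move=> nD mv _ Y mY; rewrite setTI.
have -> : v @^-1` Y = (D `&` v @^-1` Y) `|` (~` D `&` v @^-1` Y).
  by rewrite -setIUl setUv setTI.
apply: measurableU; first exact: (mv (ae_measurable nD) _ mY).
by apply: cmu; apply: negligibleS nD; exact: subIsetl.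
Qed.

Lemma strongly_measurable_measurable (v : S -> R) :
  strongly_measurable mu v -> measurable_fun setT v.
Proof.
move=> [phi [sphi phiv]]; apply: (measurable_fun_ae phiv).
apply: (measurable_fun_cvg (h := phi)) => // n mD Y mY.
by apply: measurableI => //; exact: simple_fun_preimage.
Qed.

Context {X : normedModType R}.
Implicit Types (u v : S -> X) (C : set S).

Lemma measurable_norm u : strongly_measurable mu u ->
  measurable_fun setT (fun s => `|u s|).
Proof.
move=> su; apply: strongly_measurable_measurable.
exact: strongly_measurable_comp norm_continuous su.
Qed.

Lemma L1norm_Rintegral u : L1norm mu u = \int[mu]_s `|u s|.
Proof. by []. Qed.

Lemma L1_integrable u : L1 mu u -> mu.-integrable setT (EFin \o (fun s => `|u s|)).
Proof.
move=> [su fu]; apply/integrableP; split; first exact/measurable_EFinP/measurable_norm.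
by under eq_integral do rewrite /= normr_id.
Qed.

Lemma L1norm_ge0 u : 0 <= L1norm mu u.
Proof. exact: Rintegral_ge0. Qed.

Lemma L1norm_restrict0 u C : L1norm mu (restrict0 C u) = \int[mu]_(s in C) `|u s|.
Proof.
rewrite Rintegral_mkcond; apply: eq_Rintegral => s _.
by rewrite patchE /restrict0; case: ifP => _ //; rewrite normr0.
Qed.

Lemma L1_restrict0 u C : measurable C -> L1 mu u -> L1 mu (restrict0 C u).
Proof.
move=> mC [su fu]; have su' := strongly_measurable_restrict0 mC su.
split => //; apply: le_lt_trans fu; apply: ge0_le_integral => //.
- exact/measurable_EFinP/measurable_norm.
- exact/measurable_EFinP/measurable_norm.
- by move=> s _; rewrite lee_fin /restrict0; case: ifP; rewrite ?normr0.
Qed.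

Lemma L1norm_split u C : measurable C -> L1 mu u ->
  L1norm mu u = L1norm mu (restrict0 C u) + L1norm mu (restrict0 (~` C) u).
Proof.
move=> mC Lu; rewrite !L1norm_restrict0 -Rintegral_setU ?setUv //.
- exact: measurableC.
- exact: L1_integrable.
- by rewrite disj_set2E setICr.
Qed.

Lemma L1_scale a u : L1 mu u -> L1 mu (fscal a u).
Proof.
move=> Lu; split; first exact: strongly_measurable_comp (@scaler_continuous _ _ a) Lu.1.
under eq_integral do rewrite normrZ EFinM.
rewrite integralZl //; last exact: L1_integrable.
by apply: lte_mul_pinfty => //; exact: Lu.2.
Qed.

Lemma L1norm_scale a u : L1 mu u -> L1norm mu (fscal a u) = `|a| * L1norm mu u.
Proof.
move=> Lu; rewrite !L1norm_Rintegral -RintegralZl //; last exact: L1_integrable.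
by apply: eq_Rintegral => s _; rewrite normrZ.
Qed.

Lemma L1norm_cst_restrict0 (x : X) C : measurable C ->
  L1norm mu (restrict0 C (cst x)) = `|x| * fine (mu C).
Proof. by move=> mC; rewrite L1norm_restrict0 -(@Rintegral_cst _ _ _ mu _ mC). Qed.

Lemma L1_cst_restrict0 (x : X) C : measurable C -> (mu C < +oo)%E ->
  L1 mu (restrict0 C (cst x)).
Proof.
move=> mC muC; split.
  by apply/simple_fun_strongly_measurable/simple_fun_restrict0 => //; exact: simple_fun_cst.
rewrite (eq_integral ((cst (`|x|%:E)) \_ C)); last first.
  by move=> s _; rewrite patchE /restrict0; case: ifP; rewrite ?normr0.
rewrite -integral_mkcond integral_cst //; exact: lte_mul_pinfty.
Qed.

Lemma L1norm_restrict0_null u N : measurable N -> mu N = 0%E ->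
  strongly_measurable mu u -> L1norm mu (restrict0 N u) = 0.
Proof.
move=> mN N0 su; rewrite L1norm_restrict0 /Rintegral null_set_integral //.
apply/measurable_EFinP; apply: (measurable_funS measurableT) => //.
exact: measurable_norm.
Qed.

Lemma L1norm_ae_cst u (x : X) : {ae mu, forall s, u s = x} ->
  L1norm mu u = `|x| * fine (mu setT).
Proof.
move=> ux; rewrite L1norm_Rintegral -(@Rintegral_cst _ _ _ mu _ measurableT).
have mx : measurable_fun [set: S] (fun=> (`|x|)%:E) by exact: measurable_cst.
congr fine; apply: ae_eq_integral => //.
- by apply: (ae_measurable_fun cmu) mx; apply: filterS ux => s /= ->.
- by apply: filterS ux => s /= -> .
Qed.

Lemma L1_integrable_comp (k : X -> R) u B : L1 mu u -> measurable B ->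
  k 0 = 0 -> (forall z w, `|k z - k w| <= `|z - w|) ->
  mu.-integrable B (EFin \o (fun s => k (u s))).
Proof.
move=> Lu mB k0 kl.
apply: (@le_integrable _ _ _ mu B mB _ (EFin \o (fun s => `|u s|))).
- apply/measurable_EFinP; apply: (measurable_funS measurableT) => //.
  apply: strongly_measurable_measurable.
  exact: strongly_measurable_comp (nonexpansive_continuous kl) Lu.1.
- by move=> s _ /=; rewrite lee_fin normr_id; have := kl (u s) 0; rewrite k0 !subr0.
- by apply: (integrableS (E := setT)) => //; exact: L1_integrable.
Qed.

End CompleteMeasure.

Section Atoms.
Context {R : realType} {d : measure_display} {S : measurableType d}.
Variable mu : {measure set S -> \bar R}.
Implicit Types (A B C : set S).

Lemma sigma_finite_null C : sigma_finite setT mu -> measurable C ->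
  (forall B, measurable B -> B `<=` C -> (mu B < +oo)%E -> mu B = 0%E) ->
  mu C = 0%E.
Proof.
move=> [F FT mF] mC Cnull; apply/negligibleP => //.
apply: (negligibleS (A := \bigcup_i (C `&` F i))).
  by move=> s Cs; have : setT s by []; rewrite FT => -[i _ Fi]; exists i.
apply: negligible_bigcup => i; have mCF : measurable (C `&` F i).
  by apply: measurableI => //; exact: (mF i).1.
apply/negligibleP => //; apply: Cnull => //.
exact: le_lt_trans (measureIr _ mC (mF i).1) (mF i).2.
Qed.

Lemma atom_lty A : sigma_finite setT mu -> is_atom mu A -> (mu A < +oo)%E.
Proof.
move=> sfmu [mA A0 atA]; rewrite ltNge leye_eq; apply/negP => /eqP Aoo.
suff : mu A = 0%E by move=> A00; rewrite A00 ltxx in A0.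
apply: sigma_finite_null => // B mB BA Bfin.
by have [//|BAeq] := atA B mB BA; rewrite BAeq Aoo ltxx in Bfin.
Qed.

Lemma measure_setT_conull A : measurable A -> mu (~` A) = 0%E -> mu setT = mu A.
Proof.
move=> mA AC0; rewrite -[in LHS](setUv A) measureU //; last 2 first.
- exact: measurableC.
- exact: setICr.
by rewrite -[RHS]adde0; congr (_ + _)%E.
Qed.

Lemma ae_exists A (P : S -> Prop) : measurable A -> (0 < mu A)%E ->
  {ae mu, forall s, P s} -> exists2 s, A s & P s.
Proof.
move=> mA A0 aeP; apply: contrapT => noAP.
have /(measure_negligible mA) A00 : mu.-negligible A.
  by apply: negligibleS aeP => s As Ps; apply: noAP; exists s.
by rewrite A00 ltxx in A0.
Qed.

Lemma negligible_bigcup_seq {I : eqType} (r : seq I) (F : I -> set S) :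
  (forall i, i \in r -> mu.-negligible (F i)) ->
  mu.-negligible (\bigcup_(i in [set` r]) F i).
Proof.
elim: r => [|i r IHr] Fr.
  have -> : [set` [::]] = @set0 I by apply/seteqP; split.
  by rewrite bigcup_set0; exact: negligible_set0.
have -> : \bigcup_(j in [set` i :: r]) F j = F i `|` \bigcup_(j in [set` r]) F j.
  apply/seteqP; split => [s [j /= + Fjs]|s [Fis|[j rj Fjs]]].
  - by rewrite inE => /predU1P[<-|rj]; [left|right; exists j].
  - by exists i => //=; rewrite mem_head.
  - by exists j => //=; rewrite inE rj orbT.
apply: negligibleU; first by apply: Fr; exact: mem_head.
by apply: IHr => j rj; apply: Fr; rewrite inE rj orbT.
Qed.

Context {X : normedModType R}.

Lemma simple_fun_ae_cst_atom (phi : S -> X) A : simple_fun phi ->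
  is_atom mu A -> (mu A < +oo)%E -> exists x, {ae mu, forall s, A s -> phi s = x}.
Proof.
move=> sphi [mA A0 atA] Afin; apply: contrapT => /forallNP noae.
have mAphi x : measurable (A `&` phi @^-1` [set x]).
  by apply: measurableI => //; exact: simple_fun_preimage.
have Aphi0 x : mu (A `&` phi @^-1` [set x]) = 0%E.
  have [//|Aphi_full] := atA _ (mAphi x) (@subIsetl _ _ _).
  apply: False_ind; apply: (noae x); exists (A `\` phi @^-1` [set x]); split.
  - by apply: measurableD => //; exact: simple_fun_preimage.
  - rewrite measureD //; last exact: simple_fun_preimage.
    transitivity (mu A - mu A)%E; first by congr (_ - _)%E.
    by rewrite subee // ge0_fin_numE.
  - by move=> s /= /not_implyP.
have : mu.-negligible A.
  have [r rphi] := (finite_seqP (range phi)).1 sphi.1.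
  have : mu.-negligible (\bigcup_(x in [set` r]) (A `&` phi @^-1` [set x])).
    by apply: negligible_bigcup_seq => x _; exact/(negligibleP _ (mAphi x))/Aphi0.
  apply: negligibleS => s As.
  by exists (phi s); rewrite -?rphi //; exists s.
by move/(measure_negligible mA) => A00; rewrite A00 ltxx in A0.
Qed.

Lemma strongly_measurable_ae_cst_atom (u : S -> X) A : strongly_measurable mu u ->
  is_atom mu A -> (mu A < +oo)%E -> exists x, {ae mu, forall s, A s -> u s = x}.
Proof.
move=> [phi [sphi phiu]] atA Afin; have [mA A0 _] := atA.
have /choice[c phic] n : exists x, {ae mu, forall s, A s -> phi n s = x}.
  exact: simple_fun_ae_cst_atom.
have good : {ae mu, forall s, (forall n, A s -> phi n s = c n) /\
                              phi n s @[n --> \oo] --> u s}.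
  by apply: filterS2 (ae_foralln phic) phiu => s; split.
have [s0 As0 [phis0 cvs0]] := ae_exists mA A0 good.
exists (u s0); apply: filterS good => s [phis cvs] As.
have phiss0 : (fun n => phi n s) = (fun n => phi n s0).
  by apply/funext => n; rewrite phis // phis0.
by rewrite phiss0 in cvs; exact: cvg_unique cvs cvs0.
Qed.

Lemma strongly_measurable_ae_cst (u : S -> X) A : strongly_measurable mu u ->
  is_atom mu A -> (mu A < +oo)%E -> mu (~` A) = 0%E ->
  exists x, {ae mu, forall s, u s = x}.
Proof.
move=> su atA Afin AC0; have [x ux] := strongly_measurable_ae_cst_atom su atA Afin.
have aeA : {ae mu, forall s, A s}.
  by case: atA => mA _ _; apply/negligibleP => //; exact: measurableC.
by exists x; apply: filterS2 ux aeA => s uxs /uxs.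
Qed.

End Atoms.

Section NormOneFunctional.
Context {R : realType} {d : measure_display} {S : measurableType d}.
Variable mu : {measure set S -> \bar R}.
Hypothesis cmu : complete_measure mu.
Context {X : normedModType R}.
Variable F : (S -> X) -> R.
Hypothesis Fnorm1 : L1_dual_norm_one mu F.

Lemma dual_norm_one_restrict0_conull (u : S -> X) N : measurable N -> mu N = 0%E ->
  L1 mu u -> F u = F (restrict0 (~` N) u).
Proof.
move=> mN N0 Lu; have [Fadd _ Fle _] := Fnorm1.
rewrite -{1}(fadd_restrict0C N u) Fadd; last 2 first.
- exact: L1_restrict0.
- by apply: L1_restrict0 => //; exact: measurableC.
suff -> : F (restrict0 N u) = 0 by rewrite add0r.
apply/eqP; rewrite -normr_le0 -(L1norm_restrict0_null cmu mN N0 Lu.1).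
by apply: Fle; exact: L1_restrict0.
Qed.

Lemma dual_norm_one_ae_eq (u v : S -> X) : L1 mu u -> L1 mu v ->
  {ae mu, forall s, u s = v s} -> F u = F v.
Proof.
move=> Lu Lv [N [mN N0 uvN]].
rewrite (dual_norm_one_restrict0_conull mN N0 Lu) (dual_norm_one_restrict0_conull mN N0 Lv).
congr F; apply/funext => s; rewrite /restrict0; case: ifPn => // /set_mem Ns.
by apply: contrapT => uv; exact/Ns/uvN.
Qed.

End NormOneFunctional.

Section SmoothPointOnAtom.
Context {R : realType} {d : measure_display} {S : measurableType d}.
Variable mu : {measure set S -> \bar R}.
Hypothesis cmu : complete_measure mu.
Context {X : normedModType R}.
Variables (f : S -> X) (A : set S) (F : (S -> X) -> R).
Hypotheses (Lf : L1 mu f) (smf : smooth_L1 mu f) (fA : forall s, ~ A s -> f s = 0).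
Hypotheses (atA : is_atom mu A) (Afin : (mu A < +oo)%E).
Hypotheses (Fnorm1 : L1_dual_norm_one mu F) (Ff : F f = L1norm mu f).

Let mA : measurable A. Proof. by case: atA. Qed.

Let muA_gt0 : 0 < fine (mu A).
Proof. by case: atA => _ A0 _; apply: fine_gt0; rewrite A0 Afin. Qed.

Let psi (x : X) : R := F (restrict0 A (cst x)) / fine (mu A).

Let psiD x y : psi (x + y) = psi x + psi y.
Proof.
have [Fadd _ _ _] := Fnorm1; rewrite /psi -mulrDl -Fadd; try exact: L1_cst_restrict0.
congr (F _ / _); apply/funext => s.
by rewrite /fadd /restrict0; case: ifP; rewrite ?addr0.
Qed.

Let psiZ a x : psi (a *: x) = a * psi x.
Proof.
have [_ Fscal _ _] := Fnorm1; rewrite /psi mulrA -Fscal; last exact: L1_cst_restrict0.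
congr (F _ / _); apply/funext => s.
by rewrite /fscal /restrict0; case: ifP; rewrite ?scaler0.
Qed.

Let psi0 : psi 0 = 0.
Proof. by rewrite -(scale0r (0 : X)) psiZ mul0r. Qed.

Let normr_psi_le x : `|psi x| <= `|x|.
Proof.
have [_ _ Fle _] := Fnorm1.
rewrite /psi normrM normfV (gtr0_norm muA_gt0) ler_pdivrMr //.
by rewrite -L1norm_cst_restrict0 //; apply: Fle; exact: L1_cst_restrict0.
Qed.

Let psi_nonexpansive x y : `|psi x - psi y| <= `|x - y|.
Proof. by rewrite -[in psi x](subrK y x) psiD addrK. Qed.

Let psi_integrable (h : S -> X) B : L1 mu h -> measurable B ->
  mu.-integrable B (EFin \o (fun s => psi (h s))).
Proof. by move=> Lh mB; exact: L1_integrable_comp. Qed.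

Let normr_psi_integrable (h : S -> X) B : L1 mu h -> measurable B ->
  mu.-integrable B (EFin \o (fun s => `|psi (h s)|)).
Proof.
move=> Lh mB; apply: (L1_integrable_comp cmu (k := fun x => `|psi x|)) => //.
  by rewrite psi0 normr0.
by move=> x y; exact: le_trans (ler_dist_dist _ _) (psi_nonexpansive _ _).
Qed.

Let Fpert (B : set S) (e : R) (h : S -> X) : R :=
  F (restrict0 (~` B) h) + e * \int[mu]_(s in B) psi (h s).

Let FpertD B e g h : measurable B -> L1 mu g -> L1 mu h ->
  Fpert B e (fadd g h) = Fpert B e g + Fpert B e h.
Proof.
move=> mB Lg Lh; have [Fadd _ _ _] := Fnorm1; have mBC := measurableC mB.
rewrite /Fpert restrict0_fadd Fadd; try exact: L1_restrict0.
rewrite (@eq_Rintegral _ _ _ mu _ (fun s => psi (g s) + psi (h s))); last first.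
  by move=> s _; exact: psiD.
rewrite RintegralD //; last 2 first.
- exact: psi_integrable.
- exact: psi_integrable.
by rewrite mulrDr addrACA.
Qed.

Let FpertZ B e a g : measurable B -> L1 mu g -> Fpert B e (fscal a g) = a * Fpert B e g.
Proof.
move=> mB Lg; have [_ Fscal _ _] := Fnorm1.
rewrite /Fpert restrict0_fscal Fscal; last by apply: L1_restrict0 => //; exact: measurableC.
rewrite (@eq_Rintegral _ _ _ mu _ (fun s => a * psi (g s))); last first.
  by move=> s _; exact: psiZ.
rewrite RintegralZl //; [by rewrite mulrDr mulrCA|exact: psi_integrable].
Qed.

Let Fpert_f B e : measurable B -> B `<=` ~` A -> Fpert B e f = L1norm mu f.
Proof.
move=> mB BA; rewrite /Fpert (@eq_Rintegral _ _ _ mu _ (fun=> 0)); last first.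
  by move=> s /set_mem Bs; rewrite fA ?psi0 //; exact: BA.
rewrite Rintegral_cst // mul0r mulr0 addr0 -Ff; congr F; apply/funext => s.
rewrite /restrict0; case: (pselect (B s)) => Bs; last by rewrite mem_set.
by rewrite memNset ?fA //; exact: BA.
Qed.

Let Fpert_norm1 B e : measurable B -> B `<=` ~` A -> `|e| <= 1 ->
  L1_dual_norm_one mu (Fpert B e).
Proof.
move=> mB BA e1; have [_ _ Fle _] := Fnorm1; have [f0 _ _] := smf.
split.
- by move=> g h Lg Lh; exact: FpertD.
- by move=> a g Lg; exact: FpertZ.
- move=> g Lg; rewrite /Fpert (L1norm_split cmu mB Lg) [leRHS]addrC.
  apply: le_trans (ler_normD _ _) (lerD _ _).
    by apply: Fle; apply: L1_restrict0 => //; exact: measurableC.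
  rewrite normrM -[leRHS]mul1r; apply: ler_pM => //.
  apply: le_trans (le_normr_Rintegral mB (psi_integrable Lg mB)) _.
  rewrite L1norm_restrict0; apply: le_Rintegral.
  + exact: mB.
  + exact: normr_psi_integrable.
  + by apply: (integrableS (E := setT)) => //; exact: L1_integrable.
  + by move=> s _; exact: normr_psi_le.
- move=> eps eps0; exists (fscal (L1norm mu f)^-1 f); split.
  + exact: L1_scale.
  + by rewrite L1norm_scale // normfV ger0_norm ?L1norm_ge0 // mulVf.
  + by rewrite FpertZ // Fpert_f // mulVf // normr1 ltrBlDr ltrDl.
Qed.

Let psi_ae_cst x : {ae mu, forall s, A s -> f s = x} ->
  psi x = L1norm mu f / fine (mu A).
Proof.
move=> fx; rewrite /psi -Ff; congr (_ / _).
apply: (dual_norm_one_ae_eq cmu Fnorm1) => //; first exact: L1_cst_restrict0.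
apply: filterS fx => s fxs; rewrite /restrict0.
by case: (pselect (A s)) => As; [rewrite mem_set // fxs|rewrite memNset // fA].
Qed.

Lemma null_outside_smooth_atom B : measurable B -> (mu B < +oo)%E -> B `<=` ~` A ->
  mu B = 0%E.
Proof.
move=> mB Bfin BA; have [f0 _ Funique] := smf.
have [x fx] := strongly_measurable_ae_cst_atom Lf.1 atA Afin.
have psix0 : psi x != 0.
  by rewrite (psi_ae_cst fx) mulf_neq0 // invr_neq0 // gt_eqF.
have := Funique _ _ (Fpert_norm1 mB BA (e := 1) _) (Fpert_f 1 mB BA)
  (Fpert_norm1 mB BA (e := -1) _) (Fpert_f (-1) mB BA) _ (L1_cst_restrict0 x mB Bfin).
rewrite normr1 normrN1 lexx /Fpert => /(_ isT isT) /addrI.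
rewrite (@eq_Rintegral _ _ _ mu _ (fun=> psi x)); last first.
  by move=> s /set_mem Bs; rewrite /restrict0 mem_set.
rewrite Rintegral_cst // => /eqP; rewrite -subr_eq0 -mulrBl mulf_eq0 => /orP[|].
  by rewrite opprK (_ : 1 + 1 = 2%:R) // pnatr_eq0.
rewrite mulf_eq0 (negbTE psix0) /= fine_eq0 ?ge0_fin_numE ?measure_ge0 //.
by move/eqP.
Qed.

End SmoothPointOnAtom.

Lemma smooth_L1_atom_support_conull {R : realType} {d : measure_display}
    {S : measurableType d} (mu : {measure set S -> \bar R}) {X : normedModType R}
    (f : S -> X) :
  complete_measure mu -> sigma_finite setT mu -> L1 mu f -> smooth_L1 mu f ->
  is_atom mu [set s | f s != 0] -> mu (~` [set s | f s != 0]) = 0%E.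
Proof.
move=> cmu sfmu Lf smf atA; have [_ [F [Fnorm1 Ff]] _] := smf; have [mA _ _] := atA.
apply: sigma_finite_null => //; first exact: measurableC.
move=> B mB BA Bfin; apply: (null_outside_smooth_atom cmu Lf smf _ atA _ Fnorm1 Ff) => //.
- by move=> s /negP; rewrite negbK => /eqP.
- exact: atom_lty.
Qed.

Lemma BJ_L1_ae_cst {R : realType} {d : measure_display} {S : measurableType d}
    (mu : {measure set S -> \bar R}) {X : normedModType R} (u v : S -> X) (x y : X) :
  complete_measure mu -> (0 < mu setT < +oo)%E ->
  {ae mu, forall s, u s = x} -> {ae mu, forall s, v s = y} ->
  BJ_L1 mu u v <-> BJ x y.
Proof.
move=> cmu T0fin ux vy; have muT0 : 0 < fine (mu setT) by exact: fine_gt0.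
have uvl l : {ae mu, forall s, fadd u (fscal l v) s = x + l *: y}.
  by apply: filterS2 ux vy => s uxs vys; rewrite /fadd /fscal uxs vys.
rewrite /BJ_L1 /BJ /BJ_orth.
split => BJuv l; have := BJuv l;
  by rewrite (L1norm_ae_cst cmu ux) (L1norm_ae_cst cmu (uvl l)) ler_pM2r.
Qed.

Theorem theorem3p9 (R : realType) (X : completeNormedModType R)
  (d : measure_display) (S : measurableType d)
  (mu : {measure set S -> \bar R}) (f : S -> X) :
  frechet_differentiable_norm X ->
  complete_measure mu ->
  sigma_finite setT mu ->
  L1 mu f ->
  smooth_L1 mu f ->
  is_atom mu [set s | f s != 0] ->
  (forall s : S, left_symmetric (f s)) ->
  left_symmetric_L1 mu f.
Proof.
move=> _ cmu sfmu Lf smf atA lsym g Lg.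
have Afin := atom_lty sfmu atA.
have AC0 := smooth_L1_atom_support_conull cmu sfmu Lf smf atA.
have [mA A0 _] := atA.
have T0fin : (0 < mu setT < +oo)%E by rewrite (measure_setT_conull mA AC0) A0 Afin.
have [x fx] := strongly_measurable_ae_cst Lf.1 atA Afin AC0.
have [y gy] := strongly_measurable_ae_cst Lg.1 atA Afin AC0.
have [s0 _ fs0] := ae_exists measurableT (andP T0fin).1 fx.
rewrite (BJ_L1_ae_cst cmu T0fin fx gy) (BJ_L1_ae_cst cmu T0fin gy fx) -fs0.
exact: lsym.
Qed.
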